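(* Let $q$ be an odd prime power, let $\mathcal C$ be an irreducible conic of $\mathrm{PG}(2,q^2)$, let $\mathcal B$ be a Baer subplane of $\mathrm{PG}(2,q^2)$, and let $\mathcal E$ be the set of points of $\mathrm{PG}(2,q^2)$ external to $\mathcal C$. Then $|\mathcal E\cap\mathcal B|\geq\frac{q^2-3}{2}$.
   Context: A Baer subplane of $\mathrm{PG}(2,q^2)$ is a subplane of order $q$ (e.g. the canonically embedded $\mathrm{PG}(2,q)$). A point not on $\mathcal C$ is external to $\mathcal C$ if it lies on two tangent lines to $\mathcal C$. *)

From HB Require Import structures.
From mathcomp Require Import all_boot all_order all_algebra all_field.
Set Implicit Arguments. Unset Strict Implicit. Unset Printing Implicit Defensive.
Import GRing.Theory.
Local Open Scope ring_scope.

(* The projective plane PG(2,F) over a finite field F.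
   A point (and, dually, a line) is a 1-dimensional subspace of F^3,
   represented as a set of row vectors. *)
Section PG2.
Variable F : finFieldType.

Definition pspan (v : 'rV[F]_3) : {set 'rV[F]_3} := [set c *: v | c : F].

Definition pg_points : {set {set 'rV[F]_3}} :=
  [set pspan v | v : 'rV[F]_3 & v != 0].

Definition incident (P L : {set 'rV[F]_3}) : bool :=
  [forall u in P, forall w in L, (u *m w^T) == 0].

Definition collinear (P Q R : {set 'rV[F]_3}) : Prop :=
  exists2 L, L \in pg_points & [&& incident P L, incident Q L & incident R L].

Definition conic (A : 'M[F]_3) : {set {set 'rV[F]_3}} :=
  [set P in pg_points | [forall u in P, (u *m A *m u^T) == 0]].

(* irreducible conic in odd characteristic: nonsingular symmetric matrix *)
Definition irreducible_conic_matrix (A : 'M[F]_3) : bool :=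
  (A^T == A) && (\det A != 0).

Definition tangent (A : 'M[F]_3) (L : {set 'rV[F]_3}) : bool :=
  (L \in pg_points) && (#|[set P in conic A | incident P L]| == 1)%N.

Definition external_points (A : 'M[F]_3) : {set {set 'rV[F]_3}} :=
  [set P in pg_points | (P \notin conic A) &&
     (#|[set L in pg_points | tangent A L && incident P L]| == 2)%N].

Definition subplane_of_order (n : nat) (B : {set {set 'rV[F]_3}}) : Prop :=
  B \subset pg_points /\
  exists Ls : {set {set 'rV[F]_3}},
    [/\ Ls \subset pg_points,
        (forall L, L \in Ls -> #|[set P in B | incident P L]| = n.+1),
        (forall P Q, P \in B -> Q \in B -> P != Q ->
            exists2 L, L \in Ls & incident P L && incident Q L),
        (forall L M, L \in Ls -> M \in Ls -> L != M ->
            exists2 P, P \in B & incident P L && incident P M) &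
        (exists P1 P2 P3 P4,
            [/\ P1 \in B, P2 \in B, P3 \in B & P4 \in B] /\
            [/\ ~ collinear P1 P2 P3, ~ collinear P1 P2 P4,
                ~ collinear P1 P3 P4 & ~ collinear P2 P3 P4])].

Definition baer_subplane (q : nat) (B : {set {set 'rV[F]_3}}) : Prop :=
  subplane_of_order q B.

End PG2.

Definition prime_power (q : nat) : Prop :=
  exists p k, [/\ prime p, (0 < k)%N & q = (p ^ k)%N].

From mathcomp Require Import all_boot all_order all_algebra all_field.
From mathcomp Require Import ring.
Set Implicit Arguments. Unset Strict Implicit. Unset Printing Implicit Defensive.
Import GRing.Theory.
Local Open Scope ring_scope.

(* Count the incident pairs (P, t) with P a point of the Baer subplane B and t a tangent
   of the conic C.  A point lies on two, one or no tangents according as it is external,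
   on C or internal, so there are at most 2 |E :&: B| + |C :&: B| such pairs.  On the other
   hand C has at least q^2 + 1 points, hence as many tangents; every line of PG(2,q^2) meets
   B, and a tangent that is a line of B meets it in q + 1 points, so there are at least
   q^2 + 1 + q a pairs, a being the number of tangents that are lines of B.  Finally
   |C :&: B| <= q a + 4: as soon as C :&: B has five points, Pascal's theorem for the
   degenerate hexagon P1 P1 P2 P3 P4 P5 shows that the tangent at every point of C :&: B is
   a line of B. *)

Lemma two_neq0_odd_card (F : finFieldType) : odd #|F| -> (2%:R : F) != 0.
Proof.
move=> oddF; apply: contraTneq oddF => two0.
have charF2 : 2%N \in [pchar F] by rewrite inE /= two0 eqxx.
have cardF : #|F| = #|pPrimeCharType charF2| by [].
move: (finNzRing_gt1 F); rewrite cardF card_pprimeChar.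
by case: (logn _ _) => [|n] //; rewrite expnS oddM.
Qed.

Definition i0 : 'I_3 := @Ordinal 3 0 isT.
Definition i1 : 'I_3 := @Ordinal 3 1 isT.
Definition i2 : 'I_3 := @Ordinal 3 2 isT.

Section Coordinates.
Variable R : comPzRingType.
Local Notation V := 'rV[R]_3.
Implicit Types (u v w x : V) (a b c : R).

Lemma row3P u v : u ord0 i0 = v ord0 i0 -> u ord0 i1 = v ord0 i1 ->
  u ord0 i2 = v ord0 i2 -> u = v.
Proof.
move=> e0 e1 e2; apply/rowP => -[[|[|[|//]]] lt_i3].
- by rewrite (_ : Ordinal _ = i0) //; apply: val_inj.
- by rewrite (_ : Ordinal _ = i1) //; apply: val_inj.
- by rewrite (_ : Ordinal _ = i2) //; apply: val_inj.
Qed.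

Definition row3 a b c : V := \row_j [:: a; b; c]`_j.

Definition dot u v : R :=
  u ord0 i0 * v ord0 i0 + u ord0 i1 * v ord0 i1 + u ord0 i2 * v ord0 i2.

Definition cross u v : V :=
  row3 (u ord0 i1 * v ord0 i2 - u ord0 i2 * v ord0 i1)
       (u ord0 i2 * v ord0 i0 - u ord0 i0 * v ord0 i2)
       (u ord0 i0 * v ord0 i1 - u ord0 i1 * v ord0 i0).

End Coordinates.

Ltac vector_ring := rewrite /dot /cross; try apply: row3P; rewrite ?mxE /=; ring.

Section VectorIdentities.
Variable R : comPzRingType.
Local Notation V := 'rV[R]_3.
Implicit Types (u v w x : V) (a b c : R).

Lemma dotC u v : dot u v = dot v u.
Proof. by vector_ring. Qed.

Lemma dot0l u : dot 0 u = 0.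
Proof. by vector_ring. Qed.

Lemma dotDZl a b u v w : dot (a *: u + b *: v) w = a * dot u w + b * dot v w.
Proof. by vector_ring. Qed.

Lemma dotZr a u w : dot w (a *: u) = a * dot w u.
Proof. by vector_ring. Qed.

Lemma cross0l u : cross 0 u = 0.
Proof. by vector_ring. Qed.

Lemma cross0r u : cross u 0 = 0.
Proof. by vector_ring. Qed.

Lemma crossvv u : cross u u = 0.
Proof. by vector_ring. Qed.

Lemma crossDZl a b u v w : cross (a *: u + b *: v) w = a *: cross u w + b *: cross v w.
Proof. by vector_ring. Qed.

Lemma crossDZr a b u v w : cross w (a *: u + b *: v) = a *: cross w u + b *: cross w v.
Proof. by vector_ring. Qed.

Lemma crossZl a u w : cross (a *: u) w = a *: cross u w.
Proof. by vector_ring. Qed.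

Lemma crossZr a u w : cross w (a *: u) = a *: cross w u.
Proof. by vector_ring. Qed.

Lemma dot_crossl u v : dot u (cross u v) = 0.
Proof. by vector_ring. Qed.

Lemma dot_crossr u v : dot v (cross u v) = 0.
Proof. by vector_ring. Qed.

Lemma dot_cross_cycle x u v : dot x (cross u v) = dot u (cross v x).
Proof. by vector_ring. Qed.

Lemma cross_cross w u v : cross w (cross u v) = dot w v *: u - dot w u *: v.
Proof. by vector_ring. Qed.

Lemma cramer u v w x :
  dot u (cross v w) *: x =
  dot x (cross v w) *: u + dot u (cross x w) *: v + dot u (cross v x) *: w.
Proof. by vector_ring. Qed.

End VectorIdentities.

Section VectorFieldFacts.
Variable F : fieldType.
Local Notation V := 'rV[F]_3.
Implicit Types (u v w x : V) (a b c : F).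

Lemma row3_neq0P v :
  v != 0 -> [\/ v ord0 i0 != 0, v ord0 i1 != 0 | v ord0 i2 != 0].
Proof.
move=> v0; have [e0|] := eqVneq (v ord0 i0) 0; last by constructor 1.
have [e1|] := eqVneq (v ord0 i1) 0; last by constructor 2.
have [e2|] := eqVneq (v ord0 i2) 0; last by constructor 3.
by move: v0; rewrite (@row3P _ v 0) ?eqxx ?mxE.
Qed.

Lemma exists_dot_neq0 v : v != 0 -> exists e, dot e v != 0.
Proof.
by case/row3_neq0P; [exists (row3 1 0 0) | exists (row3 0 1 0) | exists (row3 0 0 1)];
  rewrite /dot !mxE /= !mul1r !mul0r ?add0r ?addr0.
Qed.

Lemma cross_surj w : exists u v, cross u v = w.
Proof.
have [->|/row3_neq0P[] w_ne0] := eqVneq w 0; first by exists 0, 0; rewrite cross0l.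
- exists (row3 (- w ord0 i1 / w ord0 i0) 1 0), (row3 (- w ord0 i2) 0 (w ord0 i0)).
  by apply: row3P; rewrite /cross !mxE /=; field.
- exists (row3 0 (- w ord0 i2 / w ord0 i1) 1), (row3 (w ord0 i1) (- w ord0 i0) 0).
  by apply: row3P; rewrite /cross !mxE /=; field.
- exists (row3 1 0 (- w ord0 i0 / w ord0 i2)), (row3 0 (w ord0 i2) (- w ord0 i1)).
  by apply: row3P; rewrite /cross !mxE /=; field.
Qed.

Lemma cross_eq0_scale u v : v != 0 -> cross u v = 0 -> exists c, u = c *: v.
Proof.
move=> v0 uv0; have [e e_v] := exists_dot_neq0 v0.
move: (cross_cross e u v); rewrite uv0 cross0r => /esym/eqP; rewrite subr_eq0 => /eqP uv.
by exists ((dot e v)^-1 * dot e u); rewrite -scalerA -uv scalerA mulVf ?scale1r.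
Qed.

Lemma dot_eq0_cross u v w : cross u v != 0 -> dot w u = 0 -> dot w v = 0 ->
  exists c, w = c *: cross u v.
Proof.
by move=> uv0 wu wv; apply: cross_eq0_scale; rewrite // cross_cross wu wv !scale0r subr0.
Qed.

Lemma dot_cross_eq0_span u v x : cross u v != 0 -> dot x (cross u v) = 0 ->
  exists a b, x = a *: u + b *: v.
Proof.
move=> uv0 xuv; have [e euv] := exists_dot_neq0 uv0.
have D0 : dot u (cross v e) != 0 by rewrite -dot_cross_cycle.
move: (cramer u v e x); rewrite -(dot_cross_cycle x u v) xuv scale0r addr0 => Dx.
exists ((dot u (cross v e))^-1 * dot x (cross v e)).
exists ((dot u (cross v e))^-1 * dot u (cross x e)).
by rewrite -!scalerA -scalerDr -Dx scalerA mulVf ?scale1r.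
Qed.

Lemma cross_neq0_free u v a b : cross u v != 0 -> a *: u + b *: v = 0 -> a = 0 /\ b = 0.
Proof.
move=> uv0 abuv; split.
- move: (congr1 (fun z => cross z v) abuv); rewrite crossDZl crossvv scaler0 addr0 cross0l.
  by move/eqP; rewrite scaler_eq0 (negbTE uv0) orbF => /eqP.
- move: (congr1 (cross u) abuv); rewrite crossDZr crossvv scaler0 add0r cross0r.
  by move/eqP; rewrite scaler_eq0 (negbTE uv0) orbF => /eqP.
Qed.

Lemma combl_neq0 u v a b : cross u v != 0 -> a != 0 -> a *: u + b *: v != 0.
Proof. by move=> uv0 a0; apply: contra_neq a0 => /(cross_neq0_free uv0)[]. Qed.

Lemma combr_neq0 u v a b : cross u v != 0 -> b != 0 -> a *: u + b *: v != 0.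
Proof. by move=> uv0 b0; apply: contra_neq b0 => /(cross_neq0_free uv0)[]. Qed.

End VectorFieldFacts.

Section ProjectivePlane.
Variable F : finFieldType.
Local Notation V := 'rV[F]_3.
Local Notation points := (pg_points F).
Implicit Types (u v w x y : V) (P Q X Y L M : {set V}).

Lemma pspanP u v : reflect (exists c, u = c *: v) (u \in pspan v).
Proof. by apply: (iffP imsetP) => [[c _ ->]|[c ->]]; exists c. Qed.

Lemma pspan_id v : v \in pspan v.
Proof. by apply/pspanP; exists 1; rewrite scale1r. Qed.

Lemma pspanZ c v : c != 0 -> pspan (c *: v) = pspan v.
Proof.
move=> c0; apply/setP => x; apply/pspanP/pspanP => -[d ->].
- by exists (d * c); rewrite scalerA.
- by exists (d / c); rewrite scalerA mulfVK.
Qed.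

Lemma eq_pspan u v : u != 0 -> pspan u = pspan v -> exists2 c, c != 0 & u = c *: v.
Proof.
move=> u0 uv; move: (pspan_id u); rewrite uv => /pspanP[c uc].
by exists c => //; apply: contra_neq u0 => c0; rewrite uc c0 scale0r.
Qed.

Lemma pspan_cross_neq0 u v : u != 0 -> v != 0 -> pspan u != pspan v -> cross u v != 0.
Proof.
move=> u0 v0; apply: contra_neq => /(cross_eq0_scale v0)[c uc].
have c0 : c != 0 by apply: contra_neq u0 => c0; rewrite uc c0 scale0r.
by rewrite uc pspanZ.
Qed.

Lemma pspan_point v : v != 0 -> pspan v \in points.
Proof. by move=> v0; apply/imsetP; exists v; rewrite ?inE. Qed.

(* A nonzero vector spanning P when P is a point (or a line); 0 otherwise. *)
Definition pvec P : V := odflt 0 [pick x in P | x != 0].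

Lemma pvecP P : P \in points -> pvec P != 0 /\ P = pspan (pvec P).
Proof.
case/imsetP => v; rewrite inE => v0 ->; rewrite /pvec.
case: pickP => [x /andP[/pspanP[c xc] x0]|/(_ v)] /=; last by rewrite pspan_id v0.
have c0 : c != 0 by apply: contra_neq x0 => c0; rewrite xc c0 scale0r.
by split; rewrite // xc pspanZ.
Qed.

Lemma pvec_neq0 P : P \in points -> pvec P != 0.
Proof. by case/pvecP. Qed.

Lemma pvecK P : P \in points -> pspan (pvec P) = P.
Proof. by case/pvecP => _ <-. Qed.

Lemma mulmx_trmx_dot u w : (u *m w^T) ord0 ord0 = dot u w.
Proof.
rewrite mxE big_ord_recr big_ord_recl big_ord1 /= !mxE /dot.
by congr (_ * _ + _ * _ + _ * _); congr (_ _ _); apply: val_inj.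
Qed.

Lemma incident_pspan u w : incident (pspan u) (pspan w) = (dot u w == 0).
Proof.
have dotE x y : (x *m y^T == 0) = (dot x y == 0).
  rewrite -mulmx_trmx_dot; apply/eqP/eqP => [->|xy0]; first by rewrite mxE.
  by apply/matrixP => i j; rewrite !ord1 xy0 mxE.
apply/forall_inP/eqP => [/(_ u (pspan_id u))/forall_inP/(_ w (pspan_id w))|uw0].
  by rewrite dotE => /eqP.
move=> _ /pspanP[c ->]; apply/forall_inP => _ /pspanP[d ->].
by rewrite dotE dotZr dotC dotZr dotC uw0 !mulr0.
Qed.

Lemma incident_pvec P L : P \in points -> L \in points ->
  incident P L = (dot (pvec P) (pvec L) == 0).
Proof. by move=> /pvecK{1}<- /pvecK{1}<-; exact: incident_pspan. Qed.

Lemma incidentC P L : P \in points -> L \in points -> incident P L = incident L P.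
Proof. by move=> P_pt L_pt; rewrite !incident_pvec // dotC. Qed.

Lemma points_neq_cross_neq0 P Q : P \in points -> Q \in points -> P != Q ->
  cross (pvec P) (pvec Q) != 0.
Proof.
by move=> P_pt Q_pt; rewrite -{1}(pvecK P_pt) -{1}(pvecK Q_pt); apply: pspan_cross_neq0;
  apply: pvec_neq0.
Qed.

Lemma line_through2_uniq P Q L M :
  P \in points -> Q \in points -> L \in points -> M \in points -> P != Q ->
  incident P L -> incident Q L -> incident P M -> incident Q M -> L = M.
Proof.
move=> P_pt Q_pt L_pt M_pt PQ; rewrite !incident_pvec //.
move=> /eqP PL /eqP QL /eqP PM /eqP QM; have PQ0 := points_neq_cross_neq0 P_pt Q_pt PQ.
have [c Lc] := dot_eq0_cross PQ0 (etrans (dotC _ _) PL) (etrans (dotC _ _) QL).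
have [d Md] := dot_eq0_cross PQ0 (etrans (dotC _ _) PM) (etrans (dotC _ _) QM).
have c0 : c != 0 by apply: contra_neq (pvec_neq0 L_pt) => c0; rewrite Lc c0 scale0r.
have d0 : d != 0 by apply: contra_neq (pvec_neq0 M_pt) => d0; rewrite Md d0 scale0r.
by rewrite -(pvecK L_pt) -(pvecK M_pt) Lc Md !pspanZ.
Qed.

Lemma point_on2_uniq P Q L M :
  P \in points -> Q \in points -> L \in points -> M \in points -> L != M ->
  incident P L -> incident P M -> incident Q L -> incident Q M -> P = Q.
Proof.
move=> P_pt Q_pt L_pt M_pt LM PL PM QL QM; apply/eqP; apply: contraNT LM => PQ.
by apply/eqP; apply: (line_through2_uniq P_pt Q_pt).
Qed.

Definition pjoin X Y : {set V} := pspan (cross (pvec X) (pvec Y)).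

Lemma pjoinP X Y : X \in points -> Y \in points -> X != Y ->
  [/\ pjoin X Y \in points, incident X (pjoin X Y) & incident Y (pjoin X Y)].
Proof.
move=> X_pt Y_pt XY; split; first exact/pspan_point/points_neq_cross_neq0.
- by rewrite -{1}(pvecK X_pt) incident_pspan dot_crossl.
- by rewrite -{1}(pvecK Y_pt) incident_pspan dot_crossr.
Qed.

Lemma collinear_pspan x y z : cross x y != 0 -> dot z (cross x y) = 0 ->
  collinear (pspan x) (pspan y) (pspan z).
Proof.
move=> xy0 zxy; exists (pspan (cross x y)); first exact: pspan_point.
by rewrite !incident_pspan dot_crossl dot_crossr zxy eqxx.
Qed.

Lemma line_through P : P \in points -> exists2 L, L \in points & incident P L.
Proof.
move=> P_pt; have [u [v uvP]] := cross_surj (pvec P).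
have u0 : u != 0 by apply: contra_neq (pvec_neq0 P_pt) => u0; rewrite -uvP u0 cross0l.
exists (pspan u); first exact: pspan_point.
by rewrite -(pvecK P_pt) incident_pspan dotC -uvP dot_crossl.
Qed.

Lemma line_points L : L \in points -> exists u v, cross u v != 0 /\
  [set P in points | incident P L] = pspan v |: [set pspan (u + t *: v) | t : F].
Proof.
move=> L_pt; have [u [v uvL]] := cross_surj (pvec L).
have uv0 : cross u v != 0 by rewrite uvL pvec_neq0.
have v0 : v != 0 by apply: contra_neq uv0 => ->; rewrite cross0r.
have onL x : incident (pspan x) L = (dot x (cross u v) == 0).
  by rewrite -{1}(pvecK L_pt) incident_pspan uvL.
have utv0 t : u + t *: v != 0 by rewrite -[u]scale1r combl_neq0 ?oner_neq0.
exists u, v; split => //; apply/setP => P; rewrite !inE; apply/andP/idP.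
- case=> P_pt; rewrite -(pvecK P_pt) onL => /eqP/(dot_cross_eq0_span uv0)[a [b Pab]].
  rewrite Pab; have [a0|a0] := eqVneq a 0.
    have b0 : b != 0.
      by apply: contra_neq (pvec_neq0 P_pt) => b0; rewrite Pab a0 b0 !scale0r addr0.
    by rewrite a0 scale0r add0r pspanZ ?eqxx.
  apply/orP; right; apply/imsetP; exists (b / a) => //.
  by rewrite -(pspanZ (u + b / a *: v) a0) scalerDr scalerA mulrCA divff ?mulr1.
- case/orP => [/eqP ->|/imsetP[t _ ->]].
    by rewrite pspan_point // onL dot_crossr.
  by rewrite pspan_point ?utv0 // onL -{1}[u]scale1r dotDZl dot_crossl dot_crossr !mulr0 addr0.
Qed.

Lemma card_line_points L : L \in points -> #|[set P in points | incident P L]| = #|F|.+1.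
Proof.
move=> L_pt; have [u [v [uv0 ->]]] := line_points L_pt.
have utv0 t : u + t *: v != 0 by rewrite -[u]scale1r combl_neq0 ?oner_neq0.
rewrite cardsU1 card_imset ?cardsT.
  suff -> : pspan v \notin [set pspan (u + t *: v) | t : F] by [].
  apply/imsetP => -[t _ /esym/(eq_pspan (utv0 t))[c c0 utc]].
  have : 1 *: u + (t - c) *: v = 0 by rewrite scale1r scalerBl addrA utc subrr.
  by case/(cross_neq0_free uv0) => /eqP; rewrite oner_eq0.
move=> t s /(eq_pspan (utv0 t))[c c0 tsc].
have : (1 - c) *: u + (t - c * s) *: v = 0.
  by rewrite -[RHS](subrr (u + t *: v)) {2}tsc; vector_ring.
case/(cross_neq0_free uv0) => /eqP; rewrite subr_eq0 => /eqP c1 /eqP.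
by rewrite -c1 mul1r subr_eq0 => /eqP.
Qed.

Lemma line_through2 P Q : P \in points -> Q \in points ->
  exists2 L, L \in points & incident P L && incident Q L.
Proof.
move=> P_pt Q_pt; have [<-|PQ] := eqVneq P Q.
  by have [L L_pt PL] := line_through P_pt; exists L; rewrite ?PL.
by have [PQ_pt PPQ QPQ] := pjoinP P_pt Q_pt PQ; exists (pjoin P Q); rewrite ?PPQ ?QPQ.
Qed.

Lemma card_line_off_line L M : L \in points -> M \in points -> L != M ->
  (#|F| <= #|[set P in points | incident P L] :\: [set P in points | incident P M]|)%N.
Proof.
move=> L_pt M_pt LM.
have meet_le1 : (#|[set P in points | incident P L] :&: [set P in points | incident P M]| <= 1)%N.
  apply/card_le1_eqP => P P' /setIP[/setIdP[P_pt PL] /setIdP[_ PM]].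
  move=> /setIP[/setIdP[P'_pt P'L] /setIdP[_ P'M]].
  exact: (point_on2_uniq P'_pt P_pt L_pt M_pt LM).
move: (cardsID [set P in points | incident P M] [set P in points | incident P L]).
by rewrite card_line_points // => eqF; rewrite -ltnS -eqF (leq_add meet_le1 (leqnn _)).
Qed.

End ProjectivePlane.

Section Subplane.
Variables (F : finFieldType) (q : nat) (B Ls : {set {set 'rV[F]_3}}).
Local Notation points := (pg_points F).
Hypothesis B_points : B \subset points.
Hypothesis Ls_points : Ls \subset points.
Hypothesis card_Ls_line : forall L, L \in Ls -> #|[set P in B | incident P L]| = q.+1.
Hypothesis B_join : forall P Q, P \in B -> Q \in B -> P != Q ->
  exists2 L, L \in Ls & incident P L && incident Q L.
Hypothesis Ls_meet : forall L M, L \in Ls -> M \in Ls -> L != M ->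
  exists2 P, P \in B & incident P L && incident P M.

Let B_pt P : P \in B -> P \in points. Proof. exact: subsetP. Qed.
Let Ls_pt L : L \in Ls -> L \in points. Proof. exact: subsetP. Qed.

Lemma subplane_line P Q L : P \in B -> Q \in B -> P != Q -> L \in points ->
  incident P L -> incident Q L -> L \in Ls.
Proof.
move=> PB QB PQ L_pt PL QL; have [M MLs /andP[PM QM]] := B_join PB QB PQ.
by rewrite (line_through2_uniq (B_pt PB) (B_pt QB) L_pt (Ls_pt MLs) PQ PL QL PM QM).
Qed.

Lemma subplane_point L M X : L \in Ls -> M \in Ls -> L != M -> X \in points ->
  incident X L -> incident X M -> X \in B.
Proof.
move=> LLs MLs LM X_pt XL XM; have [P PB /andP[PL PM]] := Ls_meet LLs MLs LM.
by rewrite (point_on2_uniq X_pt (B_pt PB) (Ls_pt LLs) (Ls_pt MLs) LM XL XM PL PM).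
Qed.

Lemma subplane_collinear P Q Y : P \in B -> Q \in B -> P != Q -> collinear P Q Y ->
  exists2 L, L \in Ls & [&& incident P L, incident Q L & incident Y L].
Proof.
move=> PB QB PQ [L L_pt /and3P[PL QL YL]]; exists L; last by rewrite PL QL YL.
exact: (subplane_line PB QB PQ L_pt).
Qed.

Lemma subplane_two_lines P1 P2 P3 : P1 \in B -> P2 \in B -> P3 \in B ->
  ~ collinear P1 P2 P3 -> exists L1 L2, [/\ L1 \in Ls, L2 \in Ls & L1 != L2].
Proof.
move=> P1B P2B P3B ncol.
have P12 : P1 != P2.
  apply: contra_notN ncol => /eqP <-.
  have [L L_pt /andP[P1L P3L]] := line_through2 (B_pt P1B) (B_pt P3B).
  by exists L => //; rewrite P1L P3L.
have P13 : P1 != P3.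
  apply: contra_notN ncol => /eqP <-.
  have [L L_pt /andP[P1L P2L]] := line_through2 (B_pt P1B) (B_pt P2B).
  by exists L => //; rewrite P1L P2L.
have [L1 L1Ls /andP[P1L1 P2L1]] := B_join P1B P2B P12.
have [L2 L2Ls /andP[P1L2 P3L2]] := B_join P1B P3B P13.
exists L1, L2; split => //; apply: contra_notN ncol => /eqP L12.
by exists L1; rewrite ?Ls_pt // P1L1 P2L1 L12.
Qed.

Lemma card_subplane_line_minus P L : L \in Ls -> P \in B -> incident P L ->
  #|[set R in B | incident R L] :\ P| = q.
Proof.
move=> LLs PB PL; apply/eqP; rewrite -eqSS -(card_Ls_line LLs).
by rewrite (cardsD1 P [set R in B | _]) inE PB PL.
Qed.

Lemma card_subplane_lines L1 L2 : L1 \in Ls -> L2 \in Ls -> L1 != L2 ->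
  (q ^ 2 + 2 <= #|Ls|)%N.
Proof.
move=> L1Ls L2Ls L12; have [P PB /andP[PL1 PL2]] := Ls_meet L1Ls L2Ls L12.
pose S1 := [set R in B | incident R L1] :\ P.
pose S2 := [set R in B | incident R L2] :\ P.
have S1P R : R \in S1 -> [/\ R \in B, incident R L1 & ~~ incident R L2].
  rewrite !inE => /and3P[RP RB RL1]; split => //; apply: contra RP => RL2.
  by rewrite (point_on2_uniq (B_pt RB) (B_pt PB) (Ls_pt L1Ls) (Ls_pt L2Ls) L12).
have S2P S : S \in S2 -> [/\ S \in B, incident S L2 & ~~ incident S L1].
  rewrite !inE => /and3P[SP SB SL2]; split => //; apply: contra SP => SL1.
  by rewrite (point_on2_uniq (B_pt SB) (B_pt PB) (Ls_pt L1Ls) (Ls_pt L2Ls) L12).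
pose join (RS : {set 'rV[F]_3} * {set 'rV[F]_3}) := pjoin RS.1 RS.2.
have joinP R S : R \in S1 -> S \in S2 ->
    [/\ join (R, S) \in Ls, incident R (join (R, S)) & incident S (join (R, S))].
  move=> /S1P[RB RL1 _] /S2P[SB _ SL1].
  have RS : R != S by apply: contraNneq SL1 => <-.
  have [RS_pt RRS SRS] := pjoinP (B_pt RB) (B_pt SB) RS.
  by split => //; apply: (subplane_line RB SB RS).
have join_inj : {in setX S1 S2 &, injective join}.
  move=> [R S] [R' S']; rewrite !in_setX /= => /andP[RS1 SS2] /andP[R'S1 S'S2] eqj.
  have [/Ls_pt M_pt RM SM] := joinP R S RS1 SS2.
  have [_ R'M S'M] := joinP R' S' R'S1 S'S2; rewrite -eqj in R'M S'M.
  have [RB RL1 RL2] := S1P R RS1; have [R'B R'L1 _] := S1P R' R'S1.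
  have [SB SL2 SL1] := S2P S SS2; have [S'B S'L2 _] := S2P S' S'S2.
  have ML1 : join (R, S) != L1 by apply: contraNneq SL1 => <-.
  have ML2 : join (R, S) != L2 by apply: contraNneq RL2 => <-.
  congr pair.
    exact: (point_on2_uniq (B_pt RB) (B_pt R'B) M_pt (Ls_pt L1Ls) ML1).
  exact: (point_on2_uniq (B_pt SB) (B_pt S'B) M_pt (Ls_pt L2Ls) ML2).
have L1_join : L1 \notin join @: setX S1 S2.
  apply/imsetP => -[[R S]]; rewrite !in_setX /= => /andP[RS1 SS2] eqL1.
  by have [_ _ SL1] := S2P S SS2; have [_ _] := joinP R S RS1 SS2; rewrite -eqL1 (negbTE SL1).
have L2_join : L2 \notin L1 |: join @: setX S1 S2.
  rewrite in_setU1 negb_or eq_sym L12 /=; apply/imsetP => -[[R S]].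
  rewrite !in_setX /= => /andP[RS1 SS2] eqL2.
  by have [_ _ RL2] := S1P R RS1; have [_] := joinP R S RS1 SS2; rewrite -eqL2 (negbTE RL2).
have sub : L2 |: (L1 |: join @: setX S1 S2) \subset Ls.
  apply/subsetP => L; rewrite !in_setU1 => /or3P[/eqP ->|/eqP ->|/imsetP[[R S]]] //.
  by rewrite !in_setX /= => /andP[RS1 SS2] ->; have [] := joinP R S RS1 SS2.
move: (subset_leq_card sub); rewrite cardsU1 L2_join cardsU1 L1_join card_in_imset //.
by rewrite cardsX /S1 /S2 !card_subplane_line_minus // addn2 mulnn.
Qed.

Lemma subplane_meets_line L1 L2 L : #|F| = (q ^ 2)%N ->
  L1 \in Ls -> L2 \in Ls -> L1 != L2 -> L \in points ->
  exists2 P, P \in B & incident P L.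
Proof.
move=> cardF L1Ls L2Ls L12 L_pt.
apply/exists_inP; apply: contraT => /exists_inPn missL.
have neqL M : M \in Ls -> M != L.
  move=> MLs; apply: contraTneq isT => eqML.
  have /card_gt0P[P] : (0 < #|[set P in B | incident P M]|)%N by rewrite card_Ls_line.
  by rewrite inE eqML => /andP[PB PL]; move: (missL P PB); rewrite PL.
have meetP M : M \in Ls ->
    pjoin M L \in [set P in points | incident P L] /\ incident (pjoin M L) M.
  move=> MLs; have [ML_pt MML LML] := pjoinP (Ls_pt MLs) L_pt (neqL M MLs).
  by rewrite inE ML_pt (incidentC ML_pt L_pt) (incidentC ML_pt (Ls_pt MLs)) LML MML.
have meet_inj : {in Ls &, injective (fun M => pjoin M L)}.
  move=> M M' MLs M'Ls eqML; apply/eqP; apply: contraT => MM'.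
  have [/setIdP[X_pt XL] XM] := meetP M MLs; have [_] := meetP M' M'Ls; rewrite -eqML => XM'.
  by move: (missL _ (subplane_point MLs M'Ls MM' X_pt XM XM')); rewrite XL.
have sub : [set pjoin M L | M in Ls] \subset [set P in points | incident P L].
  by apply/subsetP => _ /imsetP[M MLs ->]; case: (meetP M MLs).
move: (subset_leq_card sub) (card_subplane_lines L1Ls L2Ls L12).
rewrite card_in_imset // card_line_points // cardF addn2 => le1.
by move/leq_trans/(_ le1); rewrite ltnn.
Qed.

End Subplane.

Section Conic.
Variables (F : finFieldType) (A : 'M[F]_3).
Hypotheses (A_sym : A^T = A) (detA : \det A != 0) (two_neq0 : (2%:R : F) != 0).
Local Notation V := 'rV[F]_3.
Local Notation points := (pg_points F).
Implicit Types (u v w x y : V) (P Q X Y Z L M : {set V}).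

Definition bform x y : F := dot (x *m A) y.
Definition qform x : F := bform x x.

Lemma bformC x y : bform x y = bform y x.
Proof.
rewrite /bform -!mulmx_trmx_dot.
have -> : y *m A *m x^T = (x *m A *m y^T)^T by rewrite !trmx_mul trmxK A_sym mulmxA.
by rewrite [RHS]mxE.
Qed.

Lemma bformDZl a b x y z : bform (a *: x + b *: y) z = a * bform x z + b * bform y z.
Proof. by rewrite /bform mulmxDl -!scalemxAl dotDZl. Qed.

Lemma bformDZr a b x y z : bform z (a *: x + b *: y) = a * bform z x + b * bform z y.
Proof. by rewrite bformC bformDZl !(bformC z). Qed.

Lemma bformr0 x : bform x 0 = 0.
Proof. by rewrite /bform dotC dot0l. Qed.

Lemma bformZr a x z : bform z (a *: x) = a * bform z x.
Proof. by rewrite /bform dotZr. Qed.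

Lemma bformD3l a b c x y z t :
  bform (a *: x + b *: y + c *: z) t = a * bform x t + b * bform y t + c * bform z t.
Proof. by rewrite /bform !mulmxDl -!scalemxAl; vector_ring. Qed.

Lemma bformD3r a b c x y z t :
  bform t (a *: x + b *: y + c *: z) = a * bform t x + b * bform t y + c * bform t z.
Proof. by rewrite bformC bformD3l !(bformC t). Qed.

Lemma qform_comb a b x y :
  qform (a *: x + b *: y) = a ^+ 2 * qform x + 2%:R * a * b * bform x y + b ^+ 2 * qform y.
Proof. by rewrite /qform bformDZl !bformDZr (bformC y x); ring. Qed.

Lemma qformZ c x : qform (c *: x) = c ^+ 2 * qform x.
Proof. by rewrite -[c *: x]addr0 -(scale0r x) qform_comb; ring. Qed.

Lemma mulmxA_eq0 x : (x *m A == 0) = (x == 0).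
Proof.
apply/eqP/eqP => [xA0|->]; last exact: mul0mx.
have A_unit : A \in unitmx by rewrite unitmxE unitfE.
by rewrite -(mulmxK A_unit x) xA0 mul0mx.
Qed.

Lemma conic_pspan v : v != 0 -> (pspan v \in conic A) = (qform v == 0).
Proof.
move=> v0; rewrite inE pspan_point //=.
apply/forall_inP/eqP => [/(_ v (pspan_id v))/eqP/matrixP/(_ ord0 ord0)|qv0 _ /pspanP[c ->]].
  by rewrite mulmx_trmx_dot mxE.
apply/eqP/matrixP => i j; rewrite !ord1 mulmx_trmx_dot mxE.
by rewrite -/(bform _ _) -/(qform _) qformZ qv0 mulr0.
Qed.

Lemma conic_point P : P \in conic A -> P \in points.
Proof. by rewrite inE => /andP[]. Qed.

Lemma conic_pvec P : P \in points -> (P \in conic A) = (qform (pvec P) == 0).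
Proof. by move=> P_pt; rewrite -{1}(pvecK P_pt) conic_pspan ?pvec_neq0. Qed.

Definition polar P : {set V} := pspan (pvec P *m A).

Lemma polar_point P : P \in points -> polar P \in points.
Proof. by move=> P_pt; rewrite pspan_point // mulmxA_eq0 pvec_neq0. Qed.

Lemma incident_polar P X : X \in points ->
  incident X (polar P) = (bform (pvec P) (pvec X) == 0).
Proof. by move=> X_pt; rewrite -{1}(pvecK X_pt) incident_pspan dotC. Qed.

Lemma incident_polarC P X : P \in points -> X \in points ->
  incident P (polar X) = incident X (polar P).
Proof. by move=> P_pt X_pt; rewrite !incident_polar // bformC. Qed.

Lemma polar_inj : {in points &, injective polar}.
Proof.
move=> P Q P_pt Q_pt /(eq_pspan _)[|c c0 PQ]; first by rewrite mulmxA_eq0 pvec_neq0.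
have /eqP : (pvec P - c *: pvec Q) *m A = 0 by rewrite mulmxBl -scalemxAl PQ subrr.
by rewrite mulmxA_eq0 subr_eq0 => /eqP ePQ; rewrite -(pvecK P_pt) -(pvecK Q_pt) ePQ pspanZ.
Qed.

(* Otherwise x A and y A are both orthogonal to x and y, hence both multiples of cross x y,
   and A kills a nontrivial combination of x and y. *)
Lemma bform_isotropic_neq0 x y : x != 0 -> cross x y != 0 -> qform x = 0 -> qform y = 0 ->
  bform x y != 0.
Proof.
move=> x0 xy0 qx0 qy0; apply/eqP => bxy0.
have [c xAc] := dot_eq0_cross xy0 qx0 bxy0.
have [d yAd] : exists d, y *m A = d *: cross x y.
  by apply: dot_eq0_cross; rewrite // -/(bform y x) bformC.
have /eqP : (d *: x - c *: y) *m A = 0.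
  by rewrite mulmxBl -!scalemxAl xAc yAd !scalerA mulrC subrr.
rewrite mulmxA_eq0 -scaleNr => /eqP/(cross_neq0_free xy0)[_ /eqP].
by rewrite oppr_eq0 => /eqP c0; move: x0; rewrite -mulmxA_eq0 xAc c0 scale0r eqxx.
Qed.

Lemma conic_noncollinear X Y Z : X \in conic A -> Y \in conic A -> Z \in conic A ->
  X != Y -> X != Z -> Y != Z -> ~ collinear X Y Z.
Proof.
move=> XC YC ZC XY XZ YZ [L L_pt /and3P[XL YL ZL]].
have [X_pt Y_pt Z_pt] := And3 (conic_point XC) (conic_point YC) (conic_point ZC).
have XY0 := points_neq_cross_neq0 X_pt Y_pt XY.
move: XC YC ZC; rewrite !conic_pvec // => /eqP qX /eqP qY /eqP qZ.
move: XL YL ZL; rewrite !incident_pvec // => /eqP XL /eqP YL /eqP ZL.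
have [c Lc] := dot_eq0_cross XY0 (etrans (dotC _ _) XL) (etrans (dotC _ _) YL).
have c0 : c != 0 by apply: contra_neq (pvec_neq0 L_pt) => c0; rewrite Lc c0 scale0r.
have /(dot_cross_eq0_span XY0)[a [b Zab]] : dot (pvec Z) (cross (pvec X) (pvec Y)) = 0.
  by move: ZL; rewrite Lc dotZr => /eqP; rewrite mulf_eq0 (negbTE c0) => /eqP.
have bXY := bform_isotropic_neq0 (pvec_neq0 X_pt) XY0 qX qY.
(* 0 = qform (a X + b Y) = 2 a b bform X Y, so Z = Y or Z = X. *)
move: qZ; rewrite Zab qform_comb qX qY !mulr0 addr0 add0r => /eqP.
rewrite !mulf_eq0 (negbTE two_neq0) (negbTE bXY) orbF /= => /orP[] /eqP ab0.
- have b0 : b != 0.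
    by apply: contra_neq (pvec_neq0 Z_pt) => b0; rewrite Zab ab0 b0 !scale0r addr0.
  by move: YZ; rewrite -(pvecK Y_pt) -(pvecK Z_pt) Zab ab0 scale0r add0r pspanZ ?eqxx.
- have a0 : a != 0.
    by apply: contra_neq (pvec_neq0 Z_pt) => a0; rewrite Zab ab0 a0 !scale0r addr0.
  by move: XZ; rewrite -(pvecK X_pt) -(pvecK Z_pt) Zab ab0 scale0r addr0 pspanZ ?eqxx.
Qed.

Lemma conic_incident_polar P : P \in conic A -> incident P (polar P).
Proof.
by move=> PC; rewrite incident_polar ?conic_point // -/(qform _) -conic_pvec ?conic_point.
Qed.

Lemma conic_polar_uniq P X : P \in conic A -> X \in conic A -> incident X (polar P) -> X = P.
Proof.
move=> PC XC; have [P_pt X_pt] := (conic_point PC, conic_point XC).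
rewrite incident_polar //; apply: contraTeq => XP.
move: PC XC; rewrite !conic_pvec // => /eqP qP /eqP qX.
by apply: bform_isotropic_neq0; rewrite ?pvec_neq0 // points_neq_cross_neq0 // eq_sym.
Qed.

Lemma tangent_polar P : P \in conic A -> tangent A (polar P).
Proof.
move=> PC; rewrite /tangent polar_point ?conic_point //=.
apply/cards1P; exists P; apply/setP => X; rewrite in_set1 in_set.
apply/andP/eqP => [[XC XP]|->]; first exact: conic_polar_uniq.
by rewrite PC conic_incident_polar.
Qed.

(* For x on the conic, the second intersection of the conic with the line through x and y. *)
Definition conic_second x y : V := qform y *: x - (2%:R * bform x y) *: y.

Lemma qform_conic_second x y : qform x = 0 -> qform (conic_second x y) = 0.
Proof. by move=> qx0; rewrite /conic_second -scaleNr qform_comb qx0; ring. Qed.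

Lemma conic_second_neq0 x y : cross x y != 0 -> bform x y != 0 -> conic_second x y != 0.
Proof.
move=> xy0 bxy0; rewrite /conic_second -scaleNr combr_neq0 //.
by rewrite oppr_eq0 mulf_neq0.
Qed.

Lemma pspan_conic_second x y : cross x y != 0 -> bform x y != 0 ->
  pspan (conic_second x y) != pspan x.
Proof.
move=> xy0 bxy0; apply/eqP => /(eq_pspan (conic_second_neq0 xy0 bxy0))[c _].
move/eqP; rewrite -subr_eq0 /conic_second addrAC -scalerBl -scaleNr.
move/eqP/(cross_neq0_free xy0) => [_ /eqP].
by rewrite oppr_eq0 mulf_eq0 (negbTE two_neq0) (negbTE bxy0).
Qed.

Lemma dot_cross_conic_second x y : dot y (cross x (conic_second x y)) = 0.
Proof.
by rewrite /conic_second -scaleNr crossDZr crossvv scaler0 add0r dotZr dot_crossr mulr0.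
Qed.

Lemma tangentP L : tangent A L -> exists2 X, X \in conic A & L = polar X.
Proof.
case/andP => L_pt /cards1P[X eqCL].
have /setIdP[XC XL] : X \in [set P in conic A | incident P L] by rewrite eqCL set11.
have X_pt := conic_point XC; exists X => //.
have /card_gt0P[Y] : (0 < #|[set P in points | incident P L] :\ X|)%N.
  move: (cardsD1 X [set P in points | incident P L]).
  by rewrite card_line_points // inE X_pt XL add1n => -[<-]; apply/card_gt0P; exists 0.
rewrite !inE => /and3P[YX Y_pt YL]; rewrite eq_sym in YX.
have XY0 := points_neq_cross_neq0 X_pt Y_pt YX.
have [bXY0|bXY0] := eqVneq (bform (pvec X) (pvec Y)) 0.
  apply: (line_through2_uniq X_pt Y_pt L_pt (polar_point X_pt) YX XL YL).
    exact: conic_incident_polar.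
  by rewrite incident_polar // bXY0.
have qX : qform (pvec X) = 0 by apply/eqP; rewrite -conic_pvec.
have : pspan (conic_second (pvec X) (pvec Y)) \in [set P in conic A | incident P L].
  rewrite inE conic_pspan ?conic_second_neq0 // qform_conic_second // eqxx /=.
  have XL0 : dot (pvec X) (pvec L) = 0 by apply/eqP; rewrite -incident_pvec.
  have YL0 : dot (pvec Y) (pvec L) = 0 by apply/eqP; rewrite -incident_pvec.
  rewrite -[L in incident _ L](pvecK L_pt) incident_pspan /conic_second -scaleNr.
  by rewrite dotDZl XL0 YL0 !mulr0 addr0.
rewrite eqCL in_set1 => /eqP eqX.
by move: (pspan_conic_second XY0 bXY0); rewrite eqX pvecK ?eqxx.
Qed.

Definition tangents_through P := [set L in points | tangent A L & incident P L].

Lemma card_tangents_through_conic P : P \in conic A -> (#|tangents_through P| <= 1)%N.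
Proof.
move=> PC; apply: (@leq_trans #|[set polar P]|); last by rewrite cards1.
apply/subset_leq_card/subsetP => L.
rewrite inE => /and3P[_ /tangentP[X XC ->]].
by rewrite incident_polarC ?conic_point // => /(conic_polar_uniq PC XC) ->; rewrite set11.
Qed.

Lemma tangents_throughE P : P \in points ->
  tangents_through P = polar @: [set X in conic A | incident X (polar P)].
Proof.
move=> P_pt; apply/setP => L; apply/idP/imsetP.
  rewrite inE => /and3P[_ /tangentP[X XC ->] PX].
  by exists X => //; rewrite inE XC (incident_polarC (conic_point XC) P_pt).
case=> X /setIdP[XC XP] ->.
by rewrite inE polar_point ?conic_point // tangent_polar // -(incident_polarC (conic_point XC)).
Qed.

Lemma card_tangents_through_nonconic P : P \in points -> P \notin conic A ->
  #|tangents_through P| = 0%N \/ #|tangents_through P| = 2.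
Proof.
move=> P_pt PC; pose S := [set X in conic A | incident X (polar P)].
have -> : #|tangents_through P| = #|S|.
  rewrite tangents_throughE // card_in_imset // => X Y /setIdP[XC _] /setIdP[YC _].
  exact: polar_inj (conic_point XC) (conic_point YC).
have S_le2 : (#|S| <= 2)%N.
  rewrite leqNgt; apply/negP => /card_gt2P[X [Y [Z [[XS YS ZS] [XY YZ ZX]]]]].
  move: XS YS ZS => /setIdP[XC XP] /setIdP[YC YP] /setIdP[ZC ZP].
  have XZ : X != Z by rewrite eq_sym.
  apply: (conic_noncollinear XC YC ZC XY XZ YZ).
  by exists (polar P); rewrite ?polar_point // XP YP ZP.
have S_neq1 : #|S| != 1%N.
  apply/negP => S1; have /tangentP[X XC eqPX] : tangent A (polar P).
    by rewrite /tangent polar_point.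
  by move: PC; rewrite (polar_inj P_pt (conic_point XC) eqPX) XC.
by move: S_le2 S_neq1; case: #|S| => [|[|[|]]] //; [left | right].
Qed.

Lemma conic_second_point X Y : X \in conic A -> Y \in points -> ~~ incident Y (polar X) ->
  let Z := pspan (conic_second (pvec X) (pvec Y)) in
  [/\ Z \in conic A, Z != X & collinear X Z Y].
Proof.
move=> XC Y_pt YX /=; have X_pt := conic_point XC.
have XY : X != Y by apply: contraNneq YX => <-; exact: conic_incident_polar.
have XY0 := points_neq_cross_neq0 X_pt Y_pt XY.
have bXY0 : bform (pvec X) (pvec Y) != 0 by rewrite -incident_polar.
have qX : qform (pvec X) = 0 by apply/eqP; rewrite -conic_pvec.
have Z0 := conic_second_neq0 XY0 bXY0.
have ZX := pspan_conic_second XY0 bXY0; rewrite pvecK // in ZX.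
split => //; first by rewrite conic_pspan // qform_conic_second.
rewrite -[X in collinear X _ _](pvecK X_pt) -[Y in collinear _ _ Y](pvecK Y_pt).
apply: collinear_pspan; last exact: dot_cross_conic_second.
apply: pspan_cross_neq0 => //; first exact: pvec_neq0.
by rewrite pvecK // eq_sym.
Qed.

Lemma conic_det_neq0 X Y Z : X \in conic A -> Y \in conic A -> Z \in conic A ->
  X != Y -> X != Z -> Y != Z -> dot (pvec X) (cross (pvec Y) (pvec Z)) != 0.
Proof.
move=> XC YC ZC XY XZ YZ; apply/eqP => XYZ.
have [X_pt Y_pt Z_pt] := And3 (conic_point XC) (conic_point YC) (conic_point ZC).
apply: (conic_noncollinear YC ZC XC YZ); rewrite 1?eq_sym //.
rewrite -(pvecK X_pt) -(pvecK Y_pt) -(pvecK Z_pt).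
exact: collinear_pspan (points_neq_cross_neq0 Y_pt Z_pt YZ) XYZ.
Qed.

End Conic.

Section Squares.
Variable F : finFieldType.

Definition squares : {set F} := [set x ^+ 2 | x in [set: F]].

Lemma card_sqrt_le2 (a : F) : (#|[set x : F | x ^+ 2 == a]| <= 2)%N.
Proof.
have [->|[x0]] := set_0Vmem [set x : F | x ^+ 2 == a]; first by rewrite cards0.
rewrite inE => /eqP x0a; apply: (@leq_trans #|[set x0; - x0]|); last first.
  by rewrite cards2; case: (_ != _).
apply/subset_leq_card/subsetP => x; rewrite !inE => /eqP xa.
have : (x - x0) * (x + x0) == 0 by rewrite -subr_sqr xa x0a subrr.
by rewrite mulf_eq0 subr_eq0 addr_eq0.
Qed.

Lemma card_squares : odd #|F| -> (#|F|.+1 <= 2 * #|squares|)%N.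
Proof.
move=> oddF; have cardF : #|F| = (\sum_(a in squares) #|[set x : F | x ^+ 2 == a]|)%N.
  rewrite -cardsT -sum1_card (partition_big_imset (fun x : F => x ^+ 2)) /=.
  by apply: eq_bigr => a _; rewrite -sum1_card; apply: eq_bigl => x; rewrite !inE.
have : (#|F| <= 2 * #|squares|)%N.
  by rewrite cardF mulnC -sum_nat_const; apply: leq_sum => a _; apply: card_sqrt_le2.
by rewrite leq_eqVlt => /orP[/eqP eqF|//]; move: oddF; rewrite eqF oddM.
Qed.

Lemma diagonal_quadratic_root (a b c : F) : odd #|F| -> a != 0 -> b != 0 ->
  exists x y : F, a * x ^+ 2 + b * y ^+ 2 + c = 0.
Proof.
move=> oddF a0 b0; pose Sa := [set a * s | s in squares].
pose Sb := [set - c - b * s | s in squares].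
have cardSa : #|Sa| = #|squares| by rewrite card_imset //; apply: mulfI.
have cardSb : #|Sb| = #|squares|.
  by rewrite card_imset // => s t /addrI/oppr_inj; apply: mulfI.
have /card_gt0P[t] : (0 < #|Sa :&: Sb|)%N.
  move: (cardsUI Sa Sb) (card_squares oddF) (max_card (Sa :|: Sb)).
  rewrite cardSa cardSb addnn -mul2n => <- ltFU leUF; rewrite lt0n.
  by apply: contraTneq ltFU => ->; rewrite addn0 -leqNgt.
rewrite inE => /andP[/imsetP[_ /imsetP[x _ ->] ->] /imsetP[_ /imsetP[y _ ->] eqxy]].
by exists x, y; rewrite eqxy; ring.
Qed.

End Squares.

Section ConicCard.
Variables (F : finFieldType) (A : 'M[F]_3).
Hypotheses (A_sym : A^T = A) (detA : \det A != 0) (oddF : odd #|F|).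
Local Notation V := 'rV[F]_3.
Local Notation points := (pg_points F).
Local Notation bform := (bform A).
Local Notation qform := (qform A).

(* Otherwise e1, e2, e3 below form an orthogonal basis of anisotropic vectors, and
   x e1 + y e2 + e3 is isotropic for a solution of
   qform e1 * x^2 + qform e2 * y^2 + qform e3 = 0. *)
Lemma exists_isotropic : exists2 v : V, v != 0 & qform v = 0.
Proof.
have [/existsP[v /andP[v0 /eqP qv]]|/existsPn aniso] :=
  boolP [exists v : V, (v != 0) && (qform v == 0)]; first by exists v.
have {}aniso v : v != 0 -> qform v != 0 by move=> v0; move: (aniso v); rewrite v0.
pose e1 : V := row3 1 0 0.
have e1_0 : e1 != 0 by apply/eqP => /rowP/(_ i0); rewrite !mxE; apply/eqP/oner_neq0.
have e1A0 : e1 *m A != 0 by rewrite (mulmxA_eq0 detA).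
have [e2 [v e1A]] := cross_surj (e1 *m A).
have e2_0 : e2 != 0 by apply: contra_neq e1A0 => e2_0; rewrite -e1A e2_0 cross0l.
have b12 : bform e1 e2 = 0 by rewrite /bform -e1A dotC dot_crossl.
pose e3 := cross (e1 *m A) (e2 *m A).
have e3_0 : e3 != 0.
  apply/eqP => /(cross_eq0_scale _)[|c e12]; first by rewrite (mulmxA_eq0 detA).
  have /eqP : (e1 - c *: e2) *m A = 0 by rewrite mulmxBl -scalemxAl e12 subrr.
  rewrite (mulmxA_eq0 detA) subr_eq0 => /eqP e1c; move: (aniso e1 e1_0).
  by rewrite /qform {2}e1c bformZr b12 mulr0 eqxx.
have b13 : bform e1 e3 = 0 by rewrite /bform dot_crossl.
have b23 : bform e2 e3 = 0 by rewrite /bform dot_crossr.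
have [x [y qxy]] := diagonal_quadratic_root (qform e3) oddF (aniso e1 e1_0) (aniso e2 e2_0).
have qs : qform (x *: e1 + y *: e2) = x ^+ 2 * qform e1 + y ^+ 2 * qform e2.
  by rewrite (qform_comb A_sym) b12; ring.
have bs3 : bform (x *: e1 + y *: e2) e3 = 0 by rewrite bformDZl b13 b23 !mulr0 addr0.
move: (x *: e1 + y *: e2) qs bs3 => s qs bs3.
exists (1 *: s + 1 *: e3).
  apply: contra_neq (aniso e3 e3_0) => s30.
  move: (congr1 (bform e3) s30).
  rewrite (bformDZr A_sym) (bformC A_sym e3 s) bs3 mulr0 add0r mul1r.
  by rewrite /qform => ->; rewrite bformr0.
by rewrite (qform_comb A_sym) bs3 qs -[RHS]qxy; ring.
Qed.

Lemma card_conic_projection X L : X \in conic A -> L \in points -> ~~ incident X L ->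
  (#|[set Y in points | incident Y L] :\: [set Y in points | incident Y (polar A X)]|
    < #|conic A|)%N.
Proof.
move=> XC L_pt XL; have X_pt := conic_point XC.
set S := _ :\: _; pose g Y := pspan (conic_second A (pvec X) (pvec Y)).
have SP Y : Y \in S -> [/\ Y \in points, incident Y L & ~~ incident Y (polar A X)].
  case/setDP => /setIdP[Y_pt YL] YnX; split => //.
  by apply: contra YnX => YX; rewrite inE Y_pt.
have gP Y : Y \in S -> [/\ g Y \in conic A, g Y != X & collinear X (g Y) Y].
  by case/SP => Y_pt _ YX; apply: (conic_second_point A_sym (two_neq0_odd_card oddF)).
have g_inj : {in S &, injective g}.
  move=> Y Y' YS Y'S eqg; have [gC gX [M M_pt /and3P[XM gM YM]]] := gP Y YS.
  have [_ _ [M' M'_pt /and3P[XM' gM' Y'M']]] := gP Y' Y'S; rewrite -eqg in gM'.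
  have XgY : X != g Y by rewrite eq_sym.
  have eqM := line_through2_uniq X_pt (conic_point gC) M_pt M'_pt XgY XM gM XM' gM'.
  have ML : M != L by apply: contraNneq XL => <-.
  have [[Y_pt YL _] [Y'_pt Y'L _]] := (SP Y YS, SP Y' Y'S).
  by apply: (point_on2_uniq Y_pt Y'_pt M_pt L_pt ML); rewrite // eqM.
have sub : X |: g @: S \subset conic A.
  by apply/subsetP => Z /setU1P[->|/imsetP[Y YS ->]] //; case: (gP Y YS).
have Xg : X \notin g @: S by apply/imsetP => -[Y YS eqX]; case: (gP Y YS); rewrite -eqX eqxx.
by move: (subset_leq_card sub); rewrite cardsU1 Xg card_in_imset.
Qed.

Lemma card_conic : (#|F|.+1 <= #|conic A|)%N.
Proof.
have [v v0 qv] := exists_isotropic; pose X := pspan v.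
have XC : X \in conic A by rewrite conic_pspan // qv.
have X_pt := conic_point XC.
have [e eX] := exists_dot_neq0 (pvec_neq0 X_pt).
have L_pt : pspan e \in points.
  by apply: pspan_point; apply: contra_neq eX => ->; rewrite dot0l.
have XL : ~~ incident X (pspan e) by rewrite -{1}(pvecK X_pt) incident_pspan dotC.
have L_polar : pspan e != polar A X.
  by apply: contraNneq XL => ->; apply: conic_incident_polar.
apply: leq_ltn_trans (card_conic_projection XC L_pt XL).
exact: card_line_off_line L_pt (polar_point detA X_pt) L_polar.
Qed.

End ConicCard.

Section Comb3.
Variables (F : fieldType) (p1 p2 p3 : 'rV[F]_3).
Local Notation V := 'rV[F]_3.
Implicit Types (u v w : V).

Definition comb3 (c : V) : V := c ord0 i0 *: p1 + c ord0 i1 *: p2 + c ord0 i2 *: p3.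

Lemma comb3_row3 a b c : comb3 (row3 a b c) = a *: p1 + b *: p2 + c *: p3.
Proof. by rewrite /comb3 !mxE. Qed.

Lemma comb3_cramer x : comb3 (row3 (dot x (cross p2 p3)) (dot p1 (cross x p3))
  (dot p1 (cross p2 x))) = dot p1 (cross p2 p3) *: x.
Proof. by rewrite comb3_row3 (cramer p1 p2 p3 x). Qed.

Lemma dot_cross_comb3 u v w :
  dot (comb3 u) (cross (comb3 v) (comb3 w)) = dot u (cross v w) * dot p1 (cross p2 p3).
Proof. by rewrite /comb3; vector_ring. Qed.

Hypothesis p123 : dot p1 (cross p2 p3) != 0.

Lemma cross_comb3_neq0 u v : cross u v != 0 -> cross (comb3 u) (comb3 v) != 0.
Proof.
case/exists_dot_neq0 => e euv; apply: contra_neq (mulf_neq0 euv p123) => uv0.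
by rewrite -dot_cross_comb3 uv0 dotC dot0l.
Qed.

Lemma comb3_neq0 u : u != 0 -> comb3 u != 0.
Proof.
case/exists_dot_neq0 => e eu; have [v [w vwe]] := cross_surj e.
apply: contra_neq (mulf_neq0 eu p123) => u0.
by rewrite dotC -vwe -dot_cross_comb3 u0 dot0l.
Qed.

End Comb3.

Lemma collinear_comb3 (F : finFieldType) (p1 p2 p3 u v t : 'rV[F]_3) :
  cross (comb3 p1 p2 p3 u) (comb3 p1 p2 p3 v) != 0 -> dot t (cross u v) = 0 ->
  collinear (pspan (comb3 p1 p2 p3 u)) (pspan (comb3 p1 p2 p3 v)) (pspan (comb3 p1 p2 p3 t)).
Proof. by move=> uv0 tuv; apply: collinear_pspan; rewrite // dot_cross_comb3 tuv mul0r. Qed.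

Section PascalConfiguration.
Variables (F : finFieldType) (A : 'M[F]_3).
Hypotheses (A_sym : A^T = A) (detA : \det A != 0) (two_neq0 : (2%:R : F) != 0).
Local Notation V := 'rV[F]_3.
Local Notation points := (pg_points F).
Local Notation conic := (conic A).
Variables P1 P2 P3 P4 P5 : {set V}.
Hypotheses (P1C : P1 \in conic) (P2C : P2 \in conic) (P3C : P3 \in conic)
  (P4C : P4 \in conic) (P5C : P5 \in conic).
Hypotheses (P12 : P1 != P2) (P13 : P1 != P3) (P14 : P1 != P4) (P15 : P1 != P5)
  (P23 : P2 != P3) (P24 : P2 != P4) (P25 : P2 != P5)
  (P34 : P3 != P4) (P35 : P3 != P5) (P45 : P4 != P5).

Local Notation p1 := (pvec P1).
Local Notation p2 := (pvec P2).
Local Notation p3 := (pvec P3).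
Local Notation p4 := (pvec P4).
Local Notation p5 := (pvec P5).
Let D := dot p1 (cross p2 p3).
Let a1 := dot p4 (cross p2 p3). Let a2 := dot p1 (cross p4 p3). Let a3 := dot p1 (cross p2 p4).
Let b1 := dot p5 (cross p2 p3). Let b2 := dot p1 (cross p5 p3). Let b3 := dot p1 (cross p2 p5).

Let P_pt X : X \in conic -> X \in points. Proof. exact: conic_point. Qed.

Let D_neq0 : D != 0. Proof. exact: (conic_det_neq0 A_sym detA two_neq0). Qed.

Let a_neq0 : [/\ a1 != 0, a2 != 0 & a3 != 0].
Proof. by split; apply: (conic_det_neq0 A_sym detA two_neq0); rewrite // eq_sym. Qed.

Let b_neq0 : [/\ b1 != 0, b2 != 0 & b3 != 0].
Proof. by split; apply: (conic_det_neq0 A_sym detA two_neq0); rewrite // eq_sym. Qed.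

Local Notation c3 := (comb3 p1 p2 p3).

Let coords_P1 : c3 (row3 1 0 0) = p1.
Proof. by rewrite comb3_row3 scale1r !scale0r !addr0. Qed.
Let coords_P2 : c3 (row3 0 1 0) = p2.
Proof. by rewrite comb3_row3 scale1r !scale0r add0r addr0. Qed.
Let coords_P3 : c3 (row3 0 0 1) = p3.
Proof. by rewrite comb3_row3 scale1r !scale0r !add0r. Qed.
Let coords_P4 : c3 (row3 a1 a2 a3) = D *: p4. Proof. exact: comb3_cramer. Qed.
Let coords_P5 : c3 (row3 b1 b2 b3) = D *: p5. Proof. exact: comb3_cramer. Qed.

Let cross_neq0 X Y c d : X \in conic -> Y \in conic -> X != Y -> c != 0 -> d != 0 ->
  cross (c *: pvec X) (d *: pvec Y) != 0.
Proof.
move=> XC YC XY c0 d0; rewrite crossZl crossZr !scaler_eq0 !negb_or c0 d0 /=.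
exact: points_neq_cross_neq0 (P_pt XC) (P_pt YC) XY.
Qed.

(* Cramer's rule gives D P4 = (a1, a2, a3) and D P5 = (b1, b2, b3) in the basis p1, p2, p3;
   y, z and w are then coordinates of Y = P1P2 :&: P4P5, Z = P2P3 :&: P5P1 and
   W = YZ :&: P3P4. *)
Let y1 := b3 * a1 - a3 * b1.
Let y2 := b3 * a2 - a3 * b2.
Let alpha := b2 * a1.
Let gamma := y1 * a2 - y2 * a1.
Let y : V := row3 y1 y2 0.
Let z : V := row3 0 b2 b3.
Let w : V := row3 (alpha * y1) (alpha * y2 + gamma * b2) (gamma * b3).

Let y_neq0 : y != 0.
Proof.
have cross_y : cross (c3 y) p5 = (b3 * D) *: cross p4 p5.
  have -> : c3 y = (b3 * D) *: p4 - (a3 * D) *: p5.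
    by rewrite -!scalerA -coords_P4 -coords_P5 !comb3_row3 /y /y1 /y2; vector_ring.
  by rewrite -scaleNr crossDZl crossvv scaler0 addr0.
apply: contra_neq (_ : (b3 * D) *: cross p4 p5 != 0) => [y0|].
  by rewrite -cross_y y0 /comb3 !mxE !scale0r !addr0 cross0l.
have [_ _ b3_0] := b_neq0; rewrite -[cross _ _]scale1r -crossZl -crossZr.
by rewrite (cross_neq0 P4C P5C) ?mulf_neq0 ?oner_neq0.
Qed.

Let z_neq0 : z != 0.
Proof. by have [_ _ b3_0] := b_neq0; apply: contra_neq b3_0 => /rowP/(_ i2); rewrite !mxE. Qed.

Let w_neq0 : w != 0.
Proof.
have [[a1_0 _ _] [_ b2_0 b3_0]] := (a_neq0, b_neq0).
apply: contra_neq y_neq0 => /rowP w0.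
have /= := w0 i0; have /= := w0 i1; have /= := w0 i2; rewrite !mxE /= => w_2 w_1 w_0.
have gamma0 : gamma = 0 by apply/eqP; move/eqP: w_2; rewrite mulf_eq0 (negbTE b3_0) orbF.
have alpha0 : alpha != 0 by rewrite mulf_neq0.
have y1_0 : y1 = 0 by apply/eqP; move/eqP: w_0; rewrite mulf_eq0 (negbTE alpha0).
have y2_0 : y2 = 0.
  by apply/eqP; move/eqP: w_1; rewrite gamma0 mul0r addr0 mulf_eq0 (negbTE alpha0).
by apply/rowP => -[[|[|[|//]]] i]; rewrite /y !mxE /= ?y1_0 ?y2_0.
Qed.

Let cross_yz_neq0 : cross y z != 0.
Proof.
have [_ _ b3_0] := b_neq0; apply: contra_neq y_neq0 => /rowP yz0.
have /= := yz0 i0; have /= := yz0 i1; rewrite !mxE /= !mul0r !subr0 sub0r.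
move=> /eqP; rewrite oppr_eq0 mulf_eq0 (negbTE b3_0) orbF => /eqP y1_0.
move=> /eqP; rewrite mulf_eq0 (negbTE b3_0) orbF => /eqP y2_0.
by apply/rowP => -[[|[|[|//]]] i]; rewrite /y !mxE /= ?y1_0 ?y2_0.
Qed.

Let bform_P1_W : bform A p1 (c3 w) = 0.
Proof.
have qP X : X \in conic -> bform A (pvec X) (pvec X) = 0.
  by move=> XC; apply/eqP; rewrite -/(qform A _) -conic_pvec ?P_pt.
have [q1 q2 q3] : [/\ bform A p1 p1 = 0, bform A p2 p2 = 0 & bform A p3 p3 = 0].
  by split; apply: qP.
have q4 : qform A (c3 (row3 a1 a2 a3)) = 0.
  by rewrite coords_P4 (qformZ A_sym) /qform (qP P4 P4C) mulr0.
have q5 : qform A (c3 (row3 b1 b2 b3)) = 0.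
  by rewrite coords_P5 (qformZ A_sym) /qform (qP P5 P5C) mulr0.
have : 2%:R * bform A p1 (c3 w) =
    b2 * b3 * qform A (c3 (row3 a1 a2 a3)) - a2 * a3 * qform A (c3 (row3 b1 b2 b3)).
  rewrite /qform !comb3_row3 !bformD3l !(bformD3r A_sym).
  rewrite (bformC A_sym p2 p1) (bformC A_sym p3 p1) (bformC A_sym p3 p2) q1 q2 q3.
  by rewrite /w /gamma /alpha /y1 /y2; ring.
by rewrite q4 q5 !mulr0 subrr => /eqP; rewrite mulf_eq0 (negbTE two_neq0) => /eqP.
Qed.

Lemma pascal_tangent : exists Y Z W,
  [/\ Y \in points, Z \in points & W \in points] /\
  [/\ collinear P1 P2 Y, collinear P4 P5 Y, collinear P2 P3 Z & collinear P5 P1 Z] /\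
  [/\ collinear P3 P4 W, incident W (polar A P1) & collinear Y Z W].
Proof.
have pt u : u != 0 -> pspan (c3 u) \in points by move=> u0; apply/pspan_point/comb3_neq0.
have E1 : pspan (c3 (row3 1 0 0)) = P1 by rewrite coords_P1 pvecK ?P_pt.
have E2 : pspan (c3 (row3 0 1 0)) = P2 by rewrite coords_P2 pvecK ?P_pt.
have E3 : pspan (c3 (row3 0 0 1)) = P3 by rewrite coords_P3 pvecK ?P_pt.
have E4 : pspan (c3 (row3 a1 a2 a3)) = P4 by rewrite coords_P4 pspanZ // pvecK ?P_pt.
have E5 : pspan (c3 (row3 b1 b2 b3)) = P5 by rewrite coords_P5 pspanZ // pvecK ?P_pt.
exists (pspan (c3 y)), (pspan (c3 z)), (pspan (c3 w)).
split; first by split; apply: pt; [exact: y_neq0 | exact: z_neq0 | exact: w_neq0].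
split; [split|split].
- rewrite -[P1 in collinear P1]E1 -[P2 in collinear _ P2]E2;
  apply: collinear_comb3; last by rewrite /y; vector_ring.
  by rewrite coords_P1 coords_P2 points_neq_cross_neq0 ?P_pt.
- rewrite -[P4 in collinear P4]E4 -[P5 in collinear _ P5]E5;
  apply: collinear_comb3; last by rewrite /y /y1 /y2; vector_ring.
  by rewrite coords_P4 coords_P5 cross_neq0.
- rewrite -[P2 in collinear P2]E2 -[P3 in collinear _ P3]E3;
  apply: collinear_comb3; last by rewrite /z; vector_ring.
  by rewrite coords_P2 coords_P3 points_neq_cross_neq0 ?P_pt.
- rewrite -[P5 in collinear P5]E5 -[P1 in collinear _ P1]E1;
  apply: collinear_comb3; last by rewrite /z; vector_ring.
  by rewrite coords_P5 coords_P1 -[p1]scale1r cross_neq0 ?oner_neq0 // eq_sym.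
- rewrite -[P3 in collinear P3]E3 -[P4 in collinear _ P4]E4;
  apply: collinear_comb3; last by rewrite /w /gamma /alpha /y1 /y2; vector_ring.
  by rewrite coords_P3 coords_P4 -[p3]scale1r cross_neq0 ?oner_neq0.
- by rewrite /polar incident_pspan dotC; apply/eqP/bform_P1_W.
- apply: collinear_comb3; last by rewrite /w /y /z; vector_ring.
  by apply: cross_comb3_neq0; [exact: D_neq0 | exact: cross_yz_neq0].
Qed.

End PascalConfiguration.

Section SubplaneConic.
Variables (F : finFieldType) (A : 'M[F]_3) (B Ls : {set {set 'rV[F]_3}}).
Hypotheses (A_sym : A^T = A) (detA : \det A != 0) (two_neq0 : (2%:R : F) != 0).
Local Notation points := (pg_points F).
Hypothesis B_points : B \subset points.
Hypothesis Ls_points : Ls \subset points.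
Hypothesis B_join : forall P Q, P \in B -> Q \in B -> P != Q ->
  exists2 L, L \in Ls & incident P L && incident Q L.
Hypothesis Ls_meet : forall L M, L \in Ls -> M \in Ls -> L != M ->
  exists2 P, P \in B & incident P L && incident P M.

Let B_pt P : P \in B -> P \in points. Proof. exact: subsetP. Qed.
Let Ls_pt L : L \in Ls -> L \in points. Proof. exact: subsetP. Qed.

Let no3 X Y Z L : X \in conic A -> Y \in conic A -> Z \in conic A ->
  X != Y -> X != Z -> Y != Z -> L \in Ls -> incident X L -> incident Y L -> incident Z L ->
  False.
Proof.
move=> XC YC ZC XY XZ YZ LLs XL YL ZL.
apply: (conic_noncollinear A_sym detA two_neq0 XC YC ZC XY XZ YZ).
by exists L; rewrite ?Ls_pt // XL YL ZL.
Qed.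

Lemma subplane_tangent P1 P2 P3 P4 P5 :
  P1 \in conic A -> P2 \in conic A -> P3 \in conic A -> P4 \in conic A -> P5 \in conic A ->
  P1 \in B -> P2 \in B -> P3 \in B -> P4 \in B -> P5 \in B ->
  P1 != P2 -> P1 != P3 -> P1 != P4 -> P1 != P5 -> P2 != P3 -> P2 != P4 -> P2 != P5 ->
  P3 != P4 -> P3 != P5 -> P4 != P5 ->
  polar A P1 \in Ls.
Proof.
move=> P1C P2C P3C P4C P5C P1B P2B P3B P4B P5B P12 P13 P14 P15 P23 P24 P25 P34 P35 P45.
have [Y [Z [W [[Y_pt Z_pt W_pt] [[cY12 cY45 cZ23 cZ51] [cW34 WP1 cYZW]]]]]] :=
  pascal_tangent A_sym detA two_neq0 P1C P2C P3C P4C P5C P12 P13 P14 P15 P23 P24 P25 P34 P35 P45.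
have line := subplane_collinear B_points Ls_points B_join.
have [L12 L12Ls /and3P[P1L12 P2L12 YL12]] := line _ _ _ P1B P2B P12 cY12.
have [L45 L45Ls /and3P[P4L45 P5L45 YL45]] := line _ _ _ P4B P5B P45 cY45.
have [L23 L23Ls /and3P[P2L23 P3L23 ZL23]] := line _ _ _ P2B P3B P23 cZ23.
have P51 : P5 != P1 by rewrite eq_sym.
have [L51 L51Ls /and3P[P5L51 P1L51 ZL51]] := line _ _ _ P5B P1B P51 cZ51.
have [L34 L34Ls /and3P[P3L34 P4L34 WL34]] := line _ _ _ P3B P4B P34 cW34.
have meet := subplane_point B_points Ls_points Ls_meet.
have L12_45 : L12 != L45.
  by apply/eqP => eqL; apply: (no3 P1C P2C P4C P12 P14 P24 L12Ls); rewrite // eqL.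
have L23_51 : L23 != L51.
  by apply/eqP => eqL; apply: (no3 P1C P2C P3C P12 P13 P23 L23Ls); rewrite // eqL.
have L12_23 : L12 != L23.
  by apply/eqP => eqL; apply: (no3 P1C P2C P3C P12 P13 P23 L12Ls); rewrite // eqL.
have L34_45 : L34 != L45.
  by apply/eqP => eqL; apply: (no3 P3C P4C P5C P34 P35 P45 L34Ls); rewrite // eqL.
have YB := meet _ _ _ L12Ls L45Ls L12_45 Y_pt YL12 YL45.
have ZB := meet _ _ _ L23Ls L51Ls L23_51 Z_pt ZL23 ZL51.
have YZ : Y != Z.
  apply/eqP => eqYZ; rewrite -eqYZ in ZL23.
  have Y2 := point_on2_uniq Y_pt (B_pt P2B) (Ls_pt L12Ls) (Ls_pt L23Ls) L12_23
    YL12 ZL23 P2L12 P2L23.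
  by apply: (no3 P2C P4C P5C P24 P25 P45 L45Ls); rewrite // -Y2.
have [M MLs /and3P[YM ZM WM]] := line _ _ _ YB ZB YZ cYZW.
have M_34 : M != L34.
  apply/eqP => eqM; rewrite eqM in YM.
  have Y4 := point_on2_uniq Y_pt (B_pt P4B) (Ls_pt L34Ls) (Ls_pt L45Ls) L34_45
    YM YL45 P4L34 P4L45.
  by apply: (no3 P1C P2C P4C P12 P14 P24 L12Ls); rewrite // -Y4.
have WB := meet _ _ _ MLs L34Ls M_34 W_pt WM WL34.
have P1W : P1 != W.
  by apply/eqP => eqW; apply: (no3 P1C P3C P4C P13 P14 P34 L34Ls); rewrite // eqW.
apply: (subplane_line B_points Ls_points B_join P1B WB P1W) => //.
  exact: polar_point (conic_point P1C).
exact: conic_incident_polar.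
Qed.

End SubplaneConic.

Lemma card_set_sum (T : finType) (S : {set T}) (p : pred T) :
  #|[set x in S | p x]| = (\sum_(x in S) p x)%N.
Proof.
rewrite -sum1_card big_mkcond [RHS]big_mkcond /=; apply: eq_bigr => x _.
by rewrite inE; case: (x \in S); case: (p x).
Qed.

Lemma card_setI_sum (T : finType) (X S : {set T}) :
  #|X :&: S| = (\sum_(x in S) (x \in X))%N.
Proof. by rewrite -card_set_sum; apply: eq_card => x; rewrite !inE andbC. Qed.

Lemma double_count (T1 T2 : finType) (X : {set T1}) (Y : {set T2}) (r : T1 -> T2 -> bool) :
  (\sum_(x in X) #|[set y in Y | r x y]| = \sum_(y in Y) #|[set x in X | r x y]|)%N.
Proof.
under eq_bigr do rewrite card_set_sum.
under [RHS]eq_bigr do rewrite card_set_sum.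
exact: exchange_big.
Qed.

Section TangentCount.
Variables (F : finFieldType) (A : 'M[F]_3).
Hypotheses (A_sym : A^T = A) (detA : \det A != 0).
Local Notation points := (pg_points F).

Definition tangent_lines : {set {set 'rV[F]_3}} := [set L in points | tangent A L].

Lemma card_tangent_lines : odd #|F| -> (#|F|.+1 <= #|tangent_lines|)%N.
Proof.
move=> oddF; apply: leq_trans (card_conic A_sym detA oddF) _.
have polar_inj : {in conic A &, injective (polar A)}.
  by move=> X Y XC YC; apply: polar_inj (conic_point XC) (conic_point YC).
rewrite -(card_in_imset polar_inj); apply/subset_leq_card/subsetP => _ /imsetP[X XC ->].
by rewrite inE (polar_point detA (conic_point XC)) (tangent_polar A_sym detA XC).
Qed.

Definition tangent_incidences (B : {set {set 'rV[F]_3}}) : nat :=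
  \sum_(t in tangent_lines) #|[set P in B | incident P t]|.

Lemma tangent_incidences_le (B : {set {set 'rV[F]_3}}) : odd #|F| -> B \subset points ->
  (tangent_incidences B <= 2 * #|external_points A :&: B| + #|conic A :&: B|)%N.
Proof.
move=> oddF B_points; have two0 := two_neq0_odd_card oddF.
rewrite /tangent_incidences double_count !card_setI_sum big_distrr -big_split /=.
apply: leq_sum => P PB; have P_pt : P \in points by apply: (subsetP B_points).
have -> : [set t in tangent_lines | incident P t] = tangents_through A P.
  by apply/setP => L; rewrite !inE andbA.
have [PC|PC] := boolP (P \in conic A).
  exact: leq_trans (card_tangents_through_conic A_sym detA two0 PC) (leq_addl _ _).
case: (card_tangents_through_nonconic A_sym detA two0 P_pt PC) => cardT; rewrite cardT //.
by rewrite in_set P_pt PC -/(tangents_through A P) cardT.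
Qed.

End TangentCount.

Section SubplaneCount.
Variables (F : finFieldType) (A : 'M[F]_3) (q : nat) (B Ls : {set {set 'rV[F]_3}}).
Hypotheses (A_sym : A^T = A) (detA : \det A != 0) (two_neq0 : (2%:R : F) != 0).
Local Notation points := (pg_points F).
Hypothesis B_points : B \subset points.
Hypothesis Ls_points : Ls \subset points.
Hypothesis card_Ls_line : forall L, L \in Ls -> #|[set P in B | incident P L]| = q.+1.
Hypothesis B_join : forall P Q, P \in B -> Q \in B -> P != Q ->
  exists2 L, L \in Ls & incident P L && incident Q L.
Hypothesis Ls_meet : forall L M, L \in Ls -> M \in Ls -> L != M ->
  exists2 P, P \in B & incident P L && incident P M.

Lemma tangent_incidences_ge L1 L2 : #|F| = (q ^ 2)%N -> L1 \in Ls -> L2 \in Ls -> L1 != L2 ->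
  (#|tangent_lines A| + q * #|tangent_lines A :&: Ls| <= tangent_incidences A B)%N.
Proof.
move=> cardF L1Ls L2Ls L12; rewrite /tangent_incidences -sum1_card setIC card_setI_sum.
rewrite big_distrr -big_split /=.
apply: leq_sum => t; rewrite inE => /andP[t_pt _].
have [tLs|_] := boolP (t \in Ls); first by rewrite card_Ls_line // muln1 add1n.
have [P PB Pt] := subplane_meets_line B_points Ls_points card_Ls_line B_join Ls_meet
  cardF L1Ls L2Ls L12 t_pt.
by rewrite muln0 addn0; apply/card_gt0P; exists P; rewrite inE PB.
Qed.

Lemma subplane_polar_conic X : (4 < #|conic A :&: B|)%N -> X \in conic A :&: B ->
  polar A X \in Ls.
Proof.
move=> K4 /setIP[XC XB].
have : (4 <= #|(conic A :&: B) :\ X|)%N by move: K4; rewrite (cardsD1 X) inE XC XB.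
case/card_geqP => s [uniq_s size_s sub_s].
move: s size_s uniq_s sub_s => -[|P2 [|P3 [|P4 [|P5 [|//]]]]] // _ uniqP subK.
have : all (fun Y => [&& X != Y, Y \in conic A & Y \in B]) [:: P2; P3; P4; P5].
  by apply/allP => Y /subK/setD1P[YX /setIP[YC YB]]; rewrite eq_sym YX YC YB.
rewrite /= andbT => /and4P[/and3P[X2 P2C P2B] /and3P[X3 P3C P3B]].
move=> /and3P[X4 P4C P4B] /and3P[X5 P5C P5B].
move: uniqP; rewrite /= !inE !negb_or -!andbA andbT => /and5P[P23 P24 P25 P34 /andP[P35 P45]].
exact: (subplane_tangent A_sym detA two_neq0 B_points Ls_points B_join Ls_meet
  XC P2C P3C P4C P5C XB P2B P3B P4B P5B X2 X3 X4 X5 P23 P24 P25 P34 P35 P45).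
Qed.

Lemma card_conic_subplane : (0 < q)%N ->
  (#|conic A :&: B| <= q * #|tangent_lines A :&: Ls| + 4)%N.
Proof.
move=> q_gt0; have [K4|K4] := leqP #|conic A :&: B| 4; first exact: leq_trans K4 (leq_addl _ _).
apply: leq_trans (leq_addr 4 _); apply: leq_trans (leq_pmull _ q_gt0).
have polar_inj : {in conic A :&: B &, injective (polar A)}.
  by move=> X Y /setIP[XC _] /setIP[YC _]; apply: polar_inj (conic_point XC) (conic_point YC).
rewrite -(card_in_imset polar_inj); apply/subset_leq_card/subsetP => _ /imsetP[X XK ->].
have /setIP[XC _] := XK.
rewrite !inE (polar_point detA (conic_point XC)) (tangent_polar A_sym detA XC).
exact: subplane_polar_conic.
Qed.

End SubplaneCount.

Theorem mainTheorem18 (q : nat) (F : finFieldType) (A : 'M[F]_3)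
    (B : {set {set 'rV[F]_3}}) :
  prime_power q -> odd q -> #|F| = (q ^ 2)%N ->
  irreducible_conic_matrix A ->
  baer_subplane q B ->
  (q ^ 2 <= 2 * #|external_points A :&: B| + 3)%N.
Proof.
move=> _ odd_q cardF /andP[/eqP A_sym detA].
move=> [B_points [Ls [Ls_points card_Ls_line B_join Ls_meet]]].
case=> P1 [P2 [P3 [_ [[P1B P2B P3B _] [ncol _ _ _]]]]].
have oddF : odd #|F| by rewrite cardF oddX odd_q orbT.
have q_gt0 : (0 < q)%N by rewrite lt0n; apply: contraTneq odd_q => ->.
have [L1 [L2 [L1Ls L2Ls L12]]] := subplane_two_lines B_points Ls_points B_join P1B P2B P3B ncol.
have tangents := card_tangent_lines A_sym detA oddF; rewrite cardF in tangents.
have lower := tangent_incidences_ge A B_points Ls_points card_Ls_line B_join Ls_meet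
  cardF L1Ls L2Ls L12.
have upper := tangent_incidences_le A_sym detA oddF B_points.
have conicB := card_conic_subplane A_sym detA (two_neq0_odd_card oddF)
  B_points Ls_points B_join Ls_meet q_gt0.
have := leq_trans (leq_add tangents (leqnn _)) (leq_trans lower (leq_trans upper
  (leq_add (leqnn _) conicB))).
by rewrite addnA addnAC leq_add2r addnS ltnS.
Qed.
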